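(* Suppose there exist a measurable set $\widetilde X\subset X$ with $\mu(\widetilde X)>0$ and a measurable function $A:\widetilde X\to(0,+\infty)$ such that for every $\tau\in\widetilde X$: (i) $g(u,\tau)=0$ if and only if $u=0$; (ii) $K(s,\tau)>0$ for all $s\in(-A(\tau),A(\tau))$. If $\phi$ is a solution of (E) with $\phi(0)=0$, then $\phi(t)=0$ for all $t\in\mathbb{R}$.
   Context: Let $(X,\mu)$ be a finite measure space. Let $K:\mathbb{R}\times X\to[0,\infty)$ be measurable and integrable on $\mathbb{R}\times X$, with $\int_{\mathbb{R}}K(s,\tau)\,ds>0$ for every $\tau$. Let $g:[0,\infty)\times X\to[0,\infty)$ be measurable, with $g(0,\tau)=0$, $g(\cdot,\tau)$ continuous for each $\tau$, and the derivative $g'(0,\tau)$ at $0$ existing and positive. Equation (E): $\phi(t)=\int_X d\mu(\tau)\int_{\mathbb{R}}K(s,\tau)\,g(\phi(t-s),\tau)\,ds$, $t\in\mathbb{R}$; a solution is a continuous function $\phi:\mathbb{R}\to[0,\infty)$ satisfying (E) for all $t$. *)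

From HB Require Import structures.
From mathcomp Require Import all_boot all_order all_algebra.
From mathcomp Require Import all_classical all_reals all_analysis.
Set Implicit Arguments. Unset Strict Implicit. Unset Printing Implicit Defensive.
Import Order.TTheory GRing.Theory Num.Theory.
Import numFieldNormedType.Exports.
Local Open Scope classical_set_scope.
Local Open Scope ring_scope.

(* Right-hand side of equation (E) at time t, as an (iterated, nonnegative)
   Lebesgue integral valued in the extended reals:
   \int_X dmu(tau) \int_R K(s,tau) g(phi(t-s),tau) ds. *)
Definition E_rhs {d : measure_display} {R : realType} {X : measurableType d}
  (mu : set X -> \bar R) (K : R * X -> R) (g : R -> X -> R) (phi : R -> R)
  (t : R) : \bar R :=
  (\int[mu]_(tau in [set: X])
     \int[lebesgue_measure]_(s in [set: R]) (K (s, tau) * g (phi (t - s)) tau)%:E)%E.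

Definition is_solution {d : measure_display} {R : realType} {X : measurableType d}
  (mu : set X -> \bar R) (K : R * X -> R) (g : R -> X -> R) (phi : R -> R) : Prop :=
  continuous phi /\ (forall t, 0 <= phi t) /\
  (forall t, (phi t)%:E = E_rhs mu K g phi t).

(* The (one-sided, since g(.,tau) lives on [0,oo)) derivative of g(.,tau) at 0
   exists and is positive. *)
Definition deriv0_pos {d : measure_display} {R : realType} {X : measurableType d}
  (g : R -> X -> R) (tau : X) : Prop :=
  exists l : R, 0 < l /\ (fun h : R => (g h tau - g 0 tau) / h) @ 0^'+ --> l.

From HB Require Import structures.
From mathcomp Require Import all_boot all_order all_algebra.
From mathcomp Require Import all_classical all_reals all_analysis.
From mathcomp Require Import measurable_realfun.
Set Implicit Arguments. Unset Strict Implicit. Unset Printing Implicit Defensive.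
Import Order.TTheory GRing.Theory Num.Theory.
Import numFieldNormedType.Exports.
Local Open Scope classical_set_scope.
Local Open Scope ring_scope.

(* If phi(t) = 0, the right-hand side of (E) at t vanishes, so the inner
   integral of K(s,tau) g(phi(t-s),tau) ds is zero for mu-almost every tau.
   For some e > 0 the taus of Xt with A(tau) > e have positive measure, so one
   of them is such a tau; since K(.,tau) > 0 on (-e,e), g(.,tau) vanishes only
   at 0 and phi is continuous, phi = 0 on (t-e,t+e).  Zeros of phi thus spread
   in steps of fixed length e from 0 to all of R.  Integrability of K and the
   behaviour of g at 0 play no role. *)

Lemma ae_exists_in d (T : measurableType d) (R : realType)
    (mu : {measure set T -> \bar R}) (S : set T) (P : T -> Prop) :
  measurable S -> (0 < mu S)%E -> (\forall x \ae mu, P x) ->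
  exists2 x, S x & P x.
Proof.
move=> mS muS0 [N [mN N0 notPN]]; apply: contrapT => noSP.
have SN : S `<=` N by move=> x Sx; apply: notPN => Px; apply: noSP; exists x.
have : (mu S <= mu N)%E by rewrite le_measure ?inE.
by rewrite N0 leNgt muS0.
Qed.

Lemma measure_gt0_superlevel d (T : measurableType d) (R : realType)
    (mu : {measure set T -> \bar R}) (S : set T) (A : T -> R) :
  measurable S -> (0 < mu S)%E -> measurable_fun S A ->
  (forall x, S x -> 0 < A x) ->
  exists2 e : R, 0 < e & (0 < mu (S `&` A @^-1` `]e, +oo[))%E.
Proof.
move=> mS muS0 mA Apos; apply: contrapT => noe.
have null_level k : mu.-negligible (S `&` A @^-1` `](k.+1%:R^-1 : R), +oo[).
  exists (S `&` A @^-1` `](k.+1%:R^-1 : R), +oo[); split => //; first exact: mA.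
  apply/eqP; rewrite eq_le measure_ge0 andbT leNgt; apply/negP => muk.
  by apply: noe; exists k.+1%:R^-1.
have [N [mN N0 SN]] := negligible_bigcup null_level.
have : (mu S <= mu N)%E.
  apply: le_measure; rewrite ?inE // => x Sx; apply: SN.
  exists (Num.truncn (A x)^-1) => //; split => //=.
  by rewrite in_itv /= andbT invf_plt ?posrE ?Apos // truncnS_gt.
by rewrite N0 leNgt muS0.
Qed.

(* A Lebesgue-null set contains no ball of positive radius. *)
Lemma continuous_ae_eq0 (R : realType) (f : R -> R) (U : set R) :
  continuous f -> open U ->
  (\forall x \ae (@lebesgue_measure R), U x -> f x = 0) ->
  forall x, U x -> f x = 0.
Proof.
move=> cf oU [N [mN N0 sub]] x Ux; apply: contrapT => /eqP fx0.
have : \forall y \near x, U y /\ f y != 0.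
  near=> y; split; near: y; [exact: oU | exact: cvgr_neq0 (cf x) fx0].
move=> /(nbhs_ballP _ _).1[e /= e0 ballU].
have : (@lebesgue_measure R (ball x e) <= @lebesgue_measure R N)%E.
  apply: le_measure; rewrite ?inE //; first exact: (measurable_ball x e).
  by move=> y /ballU[Uy /eqP fy0]; apply: sub => /(_ Uy).
by rewrite N0 lebesgue_measure_ball ?(ltW e0) // lee_fin leNgt mulrn_wgt0.
Unshelve. all: by end_near.
Qed.

Lemma continuous_shift_reflect (R : realType) (phi : R -> R) (t : R) :
  continuous phi -> continuous (fun s => phi (t - s)).
Proof.
move=> cphi s; apply: continuous_comp; last exact: cphi.
by apply: cvgB; [exact: cvg_cst | exact: cvg_id].
Qed.

Lemma kernel_integral_eq0 (R : realType) (k h phi : R -> R) (a t : R) :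
  continuous phi -> (forall s, 0 <= phi s) ->
  (forall s, 0 <= k s) -> (forall s, `|s| < a -> 0 < k s) ->
  (forall u, 0 <= u -> 0 <= h u) -> (forall u, 0 <= u -> h u = 0 -> u = 0) ->
  measurable_fun [set: R] (fun s => (k s * h (phi (t - s)))%:E) ->
  (\int[lebesgue_measure]_(s in [set: R]) (k s * h (phi (t - s)))%:E = 0)%E ->
  forall s, `|s| < a -> phi (t - s) = 0.
Proof.
move=> cphi phi0 k0 kpos h0 hz mF int0 s as_s.
have F0 : (\int[lebesgue_measure]_(s in [set: R])
    `|(k s * h (phi (t - s)))%:E|)%E = 0.
  rewrite -int0; apply: eq_integral => r _.
  by rewrite gee0_abs // lee_fin mulr_ge0 // h0.
have Fae := (ae_eq_integral_abs lebesgue_measure measurableT mF).1 F0.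
apply: (@continuous_ae_eq0 _ (fun r => phi (t - r)) [set r | r \in `]- a, a[]);
  last first.
- by rewrite /= in_itv -ltr_norml.
- apply: filterS Fae => r /(_ I) /eqP.
  rewrite /= in_itv /= -ltr_norml eqe mulf_eq0.
  case/orP => [/eqP kr0 /kpos|/eqP hr0 _]; first by rewrite kr0 ltxx.
  exact: hz (phi0 _) hr0.
- exact: interval_open.
- exact: continuous_shift_reflect.
Qed.

Lemma measurable_kernel_integrand d (R : realType) (X : measurableType d)
    (K : R * X -> R) (g : R -> X -> R) (phi : R -> R) (t : R) :
  measurable_fun [set: R * X] K ->
  measurable_fun ([set u : R | 0 <= u] `*` [set: X]) (fun p => g p.1 p.2) ->
  continuous phi -> (forall s, 0 <= phi s) ->
  measurable_fun [set: R * X] (fun p => (K p * g (phi (t - p.1)) p.2)%:E).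
Proof.
move=> mK mg cphi phi0; apply/measurable_EFinP; apply: measurable_funM => //.
rewrite (_ : (fun p => _) =
  (fun q => g q.1 q.2) \o (fun p : R * X => (phi (t - p.1), p.2))) //.
apply: (measurable_comp (F := [set u : R | 0 <= u] `*` [set: X])) => //.
- apply: measurableX => //.
  rewrite (_ : [set u : R | 0 <= u] = [set` `[0%R, +oo[]).
    exact: measurable_itv.
  by apply/seteqP; split => u /=; rewrite in_itv /= andbT.
- by move=> _ [p _ <-]; split => //=.
- apply: measurable_fun_pair; last exact: measurable_snd.
  have mshift := continuous_measurable_fun (@continuous_shift_reflect _ _ t cphi).
  exact: measurableT_comp mshift (@measurable_fst _ _ R X).
Qed.

Lemma eq0_of_zero_propagation (R : realType) (phi : R -> R) (e : R) :
  0 < e -> (forall t, phi t = 0 -> forall s, `|s| < e -> phi (t - s) = 0) ->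
  phi 0 = 0 -> forall t, phi t = 0.
Proof.
move=> e0 spread phi00.
have phi_ball n t : `|t| < e *+ n.+1 -> phi t = 0.
  elim: n t => [|n IH] t t_lt.
    by rewrite -[t]opprK -sub0r; apply: spread; rewrite // normrN.
  pose d := t / n.+2%:R.
  have d_lt : `|d| < e by rewrite normrM normfV ltr_pdivrMr ?normr_nat ?mulr_natr.
  have -> : t = d *+ n.+1 - - d.
    by rewrite opprK -mulrSr -mulr_natr divfK ?pnatr_eq0.
  apply: spread; last by rewrite normrN.
  by apply: IH; rewrite normrMn ltr_pMn2r.
move=> t; apply: (phi_ball (Num.truncn (`|t| / e))).
by rewrite -mulr_natr -ltr_pdivrMl // mulrC truncnS_gt.
Qed.

Lemma solution_zero_propagates d (R : realType) (X : measurableType d)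
    (mu : {measure set X -> \bar R}) (K : R * X -> R) (g : R -> X -> R)
    (phi : R -> R) (Y : set X) (e : R) :
  measurable_fun [set: R * X] K -> (forall p, 0 <= K p) ->
  measurable_fun ([set u : R | 0 <= u] `*` [set: X]) (fun p => g p.1 p.2) ->
  (forall u tau, 0 <= u -> 0 <= g u tau) ->
  measurable Y -> (0 < mu Y)%E ->
  (forall tau, Y tau -> forall u, 0 <= u -> g u tau = 0 -> u = 0) ->
  (forall tau, Y tau -> forall s, `|s| < e -> 0 < K (s, tau)) ->
  is_solution mu K g phi ->
  forall t, phi t = 0 -> forall s, `|s| < e -> phi (t - s) = 0.
Proof.
move=> mK K0 mg g0 mY muY gY KY [cphi [phi0 phiE]] t phit.
pose F p := (K p * g (phi (t - p.1)) p.2)%:E.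
have mF : measurable_fun [set: R * X] F :=
  measurable_kernel_integrand t mK mg cphi phi0.
have F0 p : (0 <= F p)%E by rewrite lee_fin mulr_ge0 // g0.
pose G := fubini_G (@lebesgue_measure R) F.
have mG : measurable_fun [set: X] G :=
  measurable_fun_fubini_tonelli_G (m1 := @lebesgue_measure R) F mF F0.
have G_abs0 : (\int[mu]_(tau in [set: X]) `|G tau|)%E = 0.
  rewrite -[RHS]/((0 : R)%:E) -phit phiE; apply: eq_integral => tau _.
  by rewrite gee0_abs // integral_ge0.
have Gae := (ae_eq_integral_abs mu measurableT mG).1 G_abs0.
have [tau Ytau /(_ I) Gtau] := ae_exists_in mY muY Gae.
apply: (@kernel_integral_eq0 _ (fun s => K (s, tau)) (fun u => g u tau)) => //.
- exact: KY.
- by move=> u; exact: g0.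
- exact: gY.
- exact: measurable_fun_pair1 tau mF.
Qed.

Theorem lemma1p2 (d : measure_display) (R : realType) (X : measurableType d)
  (mu : {finite_measure set X -> \bar R})
  (K : R * X -> R) (g : R -> X -> R)
  (HKmeas : measurable_fun [set: R * X] K)
  (HK0 : forall p, 0 <= K p)
  (HKint : ((@lebesgue_measure R) \x mu)%E.-integrable [set: R * X] (fun p => (K p)%:E))
  (HKpos : forall tau, (0 < \int[lebesgue_measure]_(s in [set: R]) (K (s, tau))%:E)%E)
  (Hgmeas : measurable_fun ([set u : R | 0 <= u] `*` [set: X]) (fun p => g p.1 p.2))
  (Hg0 : forall u tau, 0 <= u -> 0 <= g u tau)
  (Hgzero : forall tau, g 0 tau = 0)
  (Hgcont : forall tau, {within [set u : R | 0 <= u], continuous (fun u => g u tau)})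
  (Hgder : forall tau, deriv0_pos g tau)
  (Xt : set X) (HXt : measurable Xt) (HmuXt : (0 < mu Xt)%E)
  (A : X -> R) (HAmeas : measurable_fun Xt A) (HApos : forall tau, Xt tau -> 0 < A tau)
  (Hi : forall tau, Xt tau -> forall u, 0 <= u -> (g u tau = 0 <-> u = 0))
  (Hii : forall tau, Xt tau -> forall s, - A tau < s < A tau -> 0 < K (s, tau))
  (phi : R -> R) (Hphi : is_solution mu K g phi) (Hphi0 : phi 0 = 0) :
  forall t, phi t = 0.
Proof.
have [e e0 muY] := measure_gt0_superlevel HXt HmuXt HAmeas HApos.
apply: (eq0_of_zero_propagation e0 _ Hphi0).
apply: (solution_zero_propagates HKmeas HK0 Hgmeas Hg0 _ muY _ _ Hphi).
- exact: HAmeas.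
- by move=> tau [Xtau _] u u0 /(Hi _ Xtau _ u0).
- move=> tau [Xtau]; rewrite /= in_itv /= andbT => eA s se.
  by apply: (Hii _ Xtau); rewrite -ltr_norml (lt_trans se eA).
Qed.
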